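(* Fix an integer $C\ge 2$. There exists $\rho_0>0$ (depending only on $C$) such that for every $\rho\ge\rho_0$ and every $h_S\in[0,1]$, with $h_L^\pm$ and $\hat h_F$ as in the context (so $0<h_L^-<h_L^+<1$): - if $h_L=\frac1C$, then $\dfrac{\partial \mathcal{J}_h^{\mathcal{G}}}{\partial h_F}=0$ for all $h_F\in(-1,1)$; - if $h_L\neq \frac1C$, then $\dfrac{\partial \mathcal{J}_h^{\mathcal{G}}}{\partial h_F}$ has the same sign as $\hat h_F-h_F$; in particular it is $<0$ if $h_L\in(0,h_L^-)$, or if $h_L\in(h_L^-,h_L^+)$ and $h_F\in(\hat h_F,1)$; it is $>0$ if $h_L\in(h_L^+,1]$, or if $h_L\in(h_L^-,h_L^+)$ and $h_F\in(-1,\hat h_F)$; and it is $=0$ if $h_L\in(h_L^-,h_L^+)$ and $h_F=\hat h_F$.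
   Context: Setting: $C\ge 2$ is the number of classes, $h_L\in[0,1]$ (label homophily), $h_S\in[0,1]$ (structural homophily), $h_F\in(-1,1)$ (feature homophily), and $\rho>0$ a real parameter (the spectral radius of the adjacency matrix). Define $$p_0=\frac{h_LC-1}{C-1},\qquad p_1=\frac{1-h_L}{C-1},\qquad \omega=\frac{h_F}{\rho},\qquad Q=C\,p_1^2+\frac{C(1-h_S)^2}{C-1}+p_0^2\ (>0),$$ $$\mathcal{J}_h^{\neg\mathcal{G}}=\frac{1-\omega^2 Q}{(1-\omega p_0)^2},\qquad \mathcal{J}_h^{\mathcal{G}}=\frac{p_0^2}{Q}\,\mathcal{J}_h^{\neg\mathcal{G}}.$$ Define $\hat h_F=\rho p_0/Q$ and $$h_L^+=\frac{4C+C(C-1)\rho-\sqrt{[4C+C(C-1)\rho]^2-4C(C+1)\,[\,C+1+(C-1)\rho+C(C-1)(1-h_S)^2\,]}}{2C(C+1)},$$ $$h_L^-=\frac{4C-C(C-1)\rho+\sqrt{[4C-C(C-1)\rho]^2-4C(C+1)\,[\,C+1-(C-1)\rho+C(C-1)(1-h_S)^2\,]}}{2C(C+1)}.$$ Partial derivatives are taken with $C$, $\rho$, $h_L$, $h_S$ held fixed. *)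

From Stdlib Require Import Reals.
From Coquelicot Require Import Coquelicot.
Open Scope R_scope.

Section GraphDefs.
(* C : number of classes (as a real, = INR of a natural >= 2) *)

Definition p0 (C hL : R) : R := (hL * C - 1) / (C - 1).
Definition p1 (C hL : R) : R := (1 - hL) / (C - 1).
Definition omega (rho hF : R) : R := hF / rho.
Definition Qf (C hL hS : R) : R :=
  C * (p1 C hL) ^ 2 + C * (1 - hS) ^ 2 / (C - 1) + (p0 C hL) ^ 2.

Definition J_notG (C rho hL hS hF : R) : R :=
  (1 - (omega rho hF) ^ 2 * Qf C hL hS) / (1 - omega rho hF * p0 C hL) ^ 2.

Definition J_G (C rho hL hS hF : R) : R :=
  (p0 C hL) ^ 2 / Qf C hL hS * J_notG C rho hL hS hF.

Definition hF_hat (C rho hL hS : R) : R := rho * p0 C hL / Qf C hL hS.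

Definition hL_plus (C rho hS : R) : R :=
  (4 * C + C * (C - 1) * rho
   - sqrt ((4 * C + C * (C - 1) * rho) ^ 2
           - 4 * C * (C + 1) * (C + 1 + (C - 1) * rho + C * (C - 1) * (1 - hS) ^ 2)))
  / (2 * C * (C + 1)).

Definition hL_minus (C rho hS : R) : R :=
  (4 * C - C * (C - 1) * rho
   + sqrt ((4 * C - C * (C - 1) * rho) ^ 2
           - 4 * C * (C + 1) * (C + 1 - (C - 1) * rho + C * (C - 1) * (1 - hS) ^ 2)))
  / (2 * C * (C + 1)).

End GraphDefs.

(* The derivative of J_G in hF is
     2 p0^2 / (rho^2 (1 - omega p0)^3) * (hF_hat - hF),
   and for |hF| < 1 <= rho the prefactor is positive unless p0 = 0, i.e.
   hL = 1/C.  So the sign is that of hF_hat - hF, and the particular cases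
   reduce to the location of hF_hat = rho p0 / Q outside [-1, 1]:
   hF_hat < -1 iff Q + rho p0 < 0 and hF_hat > 1 iff Q - rho p0 < 0.  Both
   quantities are, up to the factor (C - 1)^2, quadratics in hL with positive
   leading coefficient; for rho >= 2C + 4 the first is negative at 0 and the
   second at 1, both are positive at 1/C (where p0 = 0), and h_L^- and h_L^+
   are the roots bracketing these negative values. *)

From Stdlib Require Import Reals Lra.
From Coquelicot Require Import Coquelicot.
Open Scope R_scope.

Definition quadratic (a b c0 x : R) : R := a * x ^ 2 - b * x + c0.
Definition qdisc (a b c0 : R) : R := b ^ 2 - 4 * a * c0.
Definition qroot_lo (a b c0 : R) : R := (b - sqrt (qdisc a b c0)) / (2 * a).
Definition qroot_hi (a b c0 : R) : R := (b + sqrt (qdisc a b c0)) / (2 * a).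

Section Quadratic.
Variables a b c0 : R.
Hypothesis Ha : 0 < a.

Lemma quadratic_factor x : 0 <= qdisc a b c0 ->
  quadratic a b c0 x = a * (x - qroot_lo a b c0) * (x - qroot_hi a b c0).
Proof.
intro Hd. unfold quadratic, qroot_lo, qroot_hi.
assert (Hs := sqrt_sqrt _ Hd). unfold qdisc in *.
set (s := sqrt (b ^ 2 - 4 * a * c0)) in *.
replace c0 with ((b ^ 2 - s * s) / (4 * a)) at 1 by (rewrite Hs; field; lra).
field. lra.
Qed.

Lemma qroot_lo_le_hi : qroot_lo a b c0 <= qroot_hi a b c0.
Proof.
unfold qroot_lo, qroot_hi, Rdiv. apply Rmult_le_compat_r.
- apply Rlt_le, Rinv_0_lt_compat. lra.
- pose proof (sqrt_pos (qdisc a b c0)). lra.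
Qed.

Lemma quadratic_neg_iff x : 0 <= qdisc a b c0 ->
  quadratic a b c0 x < 0 <-> qroot_lo a b c0 < x < qroot_hi a b c0.
Proof.
intro Hd. rewrite quadratic_factor by exact Hd.
pose proof qroot_lo_le_hi.
split; intro Hx.
- split; apply Rnot_le_lt; intro.
  + assert (a * (x - qroot_lo a b c0) <= 0) by nra. nra.
  + assert (0 <= a * (x - qroot_lo a b c0)) by nra. nra.
- assert (0 < a * (x - qroot_lo a b c0)) by nra. nra.
Qed.

Lemma qdisc_pos x0 : quadratic a b c0 x0 < 0 -> 0 < qdisc a b c0.
Proof.
unfold quadratic, qdisc. intro H.
assert (0 <= (2 * a * x0 - b) ^ 2) by apply pow2_ge_0. nra.
Qed.

Lemma quadratic_neg_between_roots x0 : quadratic a b c0 x0 < 0 ->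
  qroot_lo a b c0 < x0 < qroot_hi a b c0.
Proof.
intro H. apply quadratic_neg_iff; [apply Rlt_le, (qdisc_pos x0)|]; exact H.
Qed.

Lemma qroot_hi_lt x0 x1 : quadratic a b c0 x0 < 0 -> 0 < quadratic a b c0 x1 ->
  x0 < x1 -> qroot_hi a b c0 < x1.
Proof.
intros H0 H1 Hx.
assert (Hd := Rlt_le _ _ (qdisc_pos x0 H0)).
destruct (quadratic_neg_between_roots x0 H0).
rewrite quadratic_factor in H1 by exact Hd.
assert (0 < a * (x1 - qroot_lo a b c0)) by nra. nra.
Qed.

Lemma qroot_lo_gt x0 x1 : quadratic a b c0 x0 < 0 -> 0 < quadratic a b c0 x1 ->
  x1 < x0 -> x1 < qroot_lo a b c0.
Proof.
intros H0 H1 Hx.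
assert (Hd := Rlt_le _ _ (qdisc_pos x0 H0)).
destruct (quadratic_neg_between_roots x0 H0).
rewrite quadratic_factor in H1 by exact Hd.
assert (a * (x1 - qroot_hi a b c0) < 0) by nra. nra.
Qed.

End Quadratic.

Lemma p0_add_p1 c x : c <> 1 -> p0 c x + c * p1 c x = 1.
Proof. intro Hc. unfold p0, p1. field. lra. Qed.

Lemma Qf_pos c x hS : 1 < c -> 0 < Qf c x hS.
Proof.
intro Hc. assert (Hsum := p0_add_p1 c x ltac:(lra)). unfold Qf.
assert (0 <= c * (1 - hS) ^ 2 / (c - 1)).
{ apply Rdiv_le_0_compat; [apply Rmult_le_pos; [lra | apply pow2_ge_0] | lra]. }
assert (0 <= p0 c x ^ 2) by apply pow2_ge_0.
destruct (Req_dec (p1 c x) 0) as [E | E].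
- rewrite E in *. replace (p0 c x) with 1 by lra. lra.
- assert (0 < p1 c x ^ 2) by (apply pow2_gt_0; exact E). nra.
Qed.

Lemma p0_eq0_iff c x : 1 < c -> p0 c x = 0 <-> x = 1 / c.
Proof.
intro Hc. split; intro H.
- assert (E : x * c - 1 = 0).
  { rewrite <- (Rmult_0_l (c - 1)), <- H. unfold p0. field. lra. }
  apply (Rmult_eq_reg_r c); [| lra]. field_simplify; lra.
- subst x. unfold p0. field. lra.
Qed.

(* Scaled by (c - 1)^2, [Qf - r * p0] is the quadratic
   [c (c + 1) hL^2 - thr_b c r * hL + thr_c c r hS] in [hL]; its roots for
   [r = -rho] and [r = rho] are [hL_minus] and [hL_plus]. *)
Definition thr_b (c r : R) : R := 4 * c + c * (c - 1) * r.
Definition thr_c (c r hS : R) : R := c + 1 + (c - 1) * r + c * (c - 1) * (1 - hS) ^ 2.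

Lemma Qf_sub_p0_quadratic c r x hS : 1 < c ->
  (Qf c x hS - r * p0 c x) * (c - 1) ^ 2 = quadratic (c * (c + 1)) (thr_b c r) (thr_c c r hS) x.
Proof. intro Hc. unfold Qf, p0, p1, quadratic, thr_b, thr_c. field. lra. Qed.

Lemma hL_minus_qroot c rho hS :
  hL_minus c rho hS = qroot_hi (c * (c + 1)) (thr_b c (- rho)) (thr_c c (- rho) hS).
Proof.
unfold hL_minus, qroot_hi, qdisc, thr_b, thr_c.
apply f_equal2; [apply f_equal2; [ring | apply f_equal; ring] | ring].
Qed.

Lemma hL_plus_qroot c rho hS :
  hL_plus c rho hS = qroot_lo (c * (c + 1)) (thr_b c rho) (thr_c c rho hS).
Proof.
unfold hL_plus, qroot_lo, qdisc, thr_b, thr_c.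
apply f_equal2; [apply f_equal2; [ring | apply f_equal; ring] | ring].
Qed.

Section Thresholds.
Variables c rho hS : R.
Hypotheses (Hc : 2 <= c) (Hrho : 2 * c + 4 <= rho) (HhS : 0 <= hS <= 1).

Let a := c * (c + 1).
Let qm := quadratic a (thr_b c (- rho)) (thr_c c (- rho) hS).
Let qp := quadratic a (thr_b c rho) (thr_c c rho hS).

Let Ha : 0 < a.
Proof. unfold a. nra. Qed.

Let hS_term_le : c * (c - 1) * (1 - hS) ^ 2 <= c * (c - 1).
Proof.
rewrite <- (Rmult_1_r (c * (c - 1))) at 2.
apply Rmult_le_compat_l; [nra | nra].
Qed.

Lemma thr_quadratic_minus_at0 : qm 0 < 0.
Proof.
unfold qm, quadratic, thr_b, thr_c.
assert ((c - 1) * (2 * c + 4) <= (c - 1) * rho) by (apply Rmult_le_compat_l; lra).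
pose proof hS_term_le.
nra.
Qed.

Lemma thr_quadratic_plus_at1 : qp 1 < 0.
Proof.
unfold qp, a, quadratic, thr_b, thr_c.
assert ((c - 1) * (2 * c + 4) <= (c - 1) * rho) by (apply Rmult_le_compat_l; lra).
pose proof hS_term_le.
nra.
Qed.

Lemma thr_quadratic_at_inv r : 0 < quadratic a (thr_b c r) (thr_c c r hS) (1 / c).
Proof.
unfold a. rewrite <- Qf_sub_p0_quadratic by lra.
rewrite (proj2 (p0_eq0_iff c (1 / c) ltac:(lra)) eq_refl).
assert (0 < Qf c (1 / c) hS) by (apply Qf_pos; lra).
assert (0 < (c - 1) ^ 2) by (apply pow2_gt_0; lra). nra.
Qed.

Lemma hL_minus_pos : 0 < hL_minus c rho hS.
Proof.
rewrite hL_minus_qroot.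
exact (proj2 (quadratic_neg_between_roots _ _ _ Ha 0 thr_quadratic_minus_at0)).
Qed.

Lemma hL_minus_lt_inv : hL_minus c rho hS < 1 / c.
Proof.
rewrite hL_minus_qroot.
apply (qroot_hi_lt _ _ _ Ha 0); [exact thr_quadratic_minus_at0 | apply thr_quadratic_at_inv |].
apply Rdiv_lt_0_compat; lra.
Qed.

Lemma inv_lt_hL_plus : 1 / c < hL_plus c rho hS.
Proof.
rewrite hL_plus_qroot.
apply (qroot_lo_gt _ _ _ Ha 1); [exact thr_quadratic_plus_at1 | apply thr_quadratic_at_inv |].
apply (Rmult_lt_reg_r c); [lra |]. unfold Rdiv. rewrite Rmult_assoc, Rinv_l; lra.
Qed.

Lemma hL_plus_lt_1 : hL_plus c rho hS < 1.
Proof.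
rewrite hL_plus_qroot.
exact (proj1 (quadratic_neg_between_roots _ _ _ Ha 1 thr_quadratic_plus_at1)).
Qed.

Let Qf_sub_p0_neg r x :
  quadratic a (thr_b c r) (thr_c c r hS) x < 0 -> Qf c x hS - r * p0 c x < 0.
Proof.
intro Hq. unfold a in Hq. rewrite <- Qf_sub_p0_quadratic in Hq by lra.
assert (0 < (c - 1) ^ 2) by (apply pow2_gt_0; lra). nra.
Qed.

Lemma hF_hat_lt_m1 hL : 0 < hL < hL_minus c rho hS -> hF_hat c rho hL hS < -1.
Proof.
intro HhL. rewrite hL_minus_qroot in HhL. fold a in HhL.
assert (Hd := qdisc_pos _ _ _ Ha 0 thr_quadratic_minus_at0).
assert (H0 := quadratic_neg_between_roots _ _ _ Ha 0 thr_quadratic_minus_at0).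
assert (Hq : qm hL < 0) by (unfold qm; apply quadratic_neg_iff; [exact Ha | lra | lra]).
assert (HQ : 0 < Qf c hL hS) by (apply Qf_pos; lra).
assert (H := Qf_sub_p0_neg (- rho) hL Hq).
unfold hF_hat. apply (Rmult_lt_reg_r (Qf c hL hS)); [exact HQ |].
unfold Rdiv. rewrite Rmult_assoc, Rinv_l; lra.
Qed.

Lemma hF_hat_gt_1 hL : hL_plus c rho hS < hL <= 1 -> 1 < hF_hat c rho hL hS.
Proof.
intro HhL. rewrite hL_plus_qroot in HhL. fold a in HhL.
assert (Hd := qdisc_pos _ _ _ Ha 1 thr_quadratic_plus_at1).
assert (H1 := quadratic_neg_between_roots _ _ _ Ha 1 thr_quadratic_plus_at1).
assert (Hq : qp hL < 0) by (unfold qp; apply quadratic_neg_iff; [exact Ha | lra | lra]).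
assert (HQ : 0 < Qf c hL hS) by (apply Qf_pos; lra).
assert (H := Qf_sub_p0_neg rho hL Hq).
unfold hF_hat. apply (Rmult_lt_reg_r (Qf c hL hS)); [exact HQ |].
unfold Rdiv. rewrite Rmult_assoc, Rinv_l; lra.
Qed.

End Thresholds.

Definition J_G_slope (c rho hL hF : R) : R :=
  2 * p0 c hL ^ 2 / (rho ^ 2 * (1 - hF / rho * p0 c hL) ^ 3).

Lemma is_derive_J_G c rho hL hS hF :
  rho <> 0 -> Qf c hL hS <> 0 -> 1 - hF / rho * p0 c hL <> 0 ->
  is_derive (J_G c rho hL hS) hF (J_G_slope c rho hL hF * (hF_hat c rho hL hS - hF)).
Proof.
intros Hr HQ Hd. unfold J_G, J_notG, J_G_slope, omega, hF_hat.
auto_derive.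
- intro H. apply Hd. nra.
- field. repeat split; [exact HQ | exact Hr |].
  intro H. apply Hd.
  replace (1 - hF / rho * p0 c hL) with ((rho - hF * p0 c hL) / rho) by (field; exact Hr).
  rewrite H. unfold Rdiv. ring.
Qed.

Lemma J_G_denominator_pos c rho hL hF : 2 <= c -> 1 <= rho -> 0 <= hL <= 1 -> -1 < hF < 1 ->
  0 < 1 - hF / rho * p0 c hL.
Proof.
intros Hc Hr HhL HhF.
assert (Hp0 : -1 <= p0 c hL <= 1).
{ assert (E : p0 c hL * (c - 1) = hL * c - 1) by (unfold p0; field; lra).
  split; apply Rnot_lt_le; intro; nra. }
assert (Hw : -1 < hF / rho < 1).
{ split; apply (Rmult_lt_reg_r rho); try lra; field_simplify; lra. }
set (w := hF / rho) in *. set (p := p0 c hL) in *.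
assert (0 <= (1 - w) * (1 + p)) by (apply Rmult_le_pos; lra).
assert (0 <= (1 + w) * (1 - p)) by (apply Rmult_le_pos; lra).
destruct (Rle_lt_dec 0 p); nra.
Qed.

Lemma J_G_slope_pos c rho hL hF : rho <> 0 -> p0 c hL <> 0 ->
  0 < 1 - hF / rho * p0 c hL -> 0 < J_G_slope c rho hL hF.
Proof.
intros Hr Hp Hd. unfold J_G_slope.
apply Rdiv_lt_0_compat.
- assert (0 < p0 c hL ^ 2) by (apply pow2_gt_0; exact Hp). lra.
- apply Rmult_lt_0_compat; [apply pow2_gt_0; exact Hr | apply pow_lt; exact Hd].
Qed.

Lemma Rmult_pos_sign K y : 0 < K ->
  (0 < K * y <-> 0 < y) /\ (K * y < 0 <-> y < 0) /\ (K * y = 0 <-> y = 0).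
Proof.
intro HK. split; [| split]; split; intro H; nra.
Qed.

Theorem theorem2p3 (C : nat) (HC : (2 <= C)%nat) :
  exists rho0 : R, 0 < rho0 /\
  forall rho hS : R, rho0 <= rho -> 0 <= hS <= 1 ->
    let Cr := INR C in
    let hLm := hL_minus Cr rho hS in
    let hLp := hL_plus Cr rho hS in
    (0 < hLm /\ hLm < hLp /\ hLp < 1) /\
    forall hL hF : R, 0 <= hL <= 1 -> -1 < hF < 1 ->
      let f := fun x : R => J_G Cr rho hL hS x in
      let D := Derive f hF in
      let hh := hF_hat Cr rho hL hS in
      ex_derive f hF /\
      (hL = 1 / Cr -> D = 0) /\
      (hL <> 1 / Cr ->
        (0 < D <-> hF < hh) /\ (D < 0 <-> hh < hF) /\ (D = 0 <-> hF = hh) /\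
        (0 < hL < hLm -> D < 0) /\
        (hLm < hL < hLp -> hh < hF -> D < 0) /\
        (hLp < hL <= 1 -> 0 < D) /\
        (hLm < hL < hLp -> hF < hh -> 0 < D) /\
        (hLm < hL < hLp -> hF = hh -> D = 0)).
Proof.
assert (Hc : 2 <= INR C) by exact (le_INR 2 C HC).
exists (2 * INR C + 4). split; [lra |].
intros rho hS Hrho HhS Cr hLm hLp.
change (2 <= Cr) in Hc. change (2 * Cr + 4 <= rho) in Hrho.
split.
{ split; [exact (hL_minus_pos Cr rho hS Hc Hrho HhS) |].
  split; [| exact (hL_plus_lt_1 Cr rho hS Hc Hrho HhS)].
  pose proof (hL_minus_lt_inv Cr rho hS Hc Hrho HhS).
  pose proof (inv_lt_hL_plus Cr rho hS Hc Hrho HhS).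
  unfold hLm, hLp. lra. }
intros hL hF HhL HhF f D hh.
assert (Hden := J_G_denominator_pos Cr rho hL hF Hc ltac:(lra) HhL HhF).
assert (Hder := is_derive_J_G Cr rho hL hS hF ltac:(lra)
                  ltac:(apply Rgt_not_eq, Qf_pos; lra) ltac:(lra)).
assert (HD : D = J_G_slope Cr rho hL hF * (hh - hF)) by exact (is_derive_unique _ _ _ Hder).
split; [eexists; exact Hder |].
split.
{ intro E. rewrite HD. unfold J_G_slope.
  rewrite (proj2 (p0_eq0_iff Cr hL ltac:(lra)) E). unfold Rdiv. ring. }
intro Hne.
assert (HK : 0 < J_G_slope Cr rho hL hF).
{ apply J_G_slope_pos; [lra | | exact Hden].
  rewrite p0_eq0_iff by lra. exact Hne. }
destruct (Rmult_pos_sign _ (hh - hF) HK) as (Spos & Sneg & Szero).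
rewrite HD.
split; [rewrite Spos; lra |]. split; [rewrite Sneg; lra |]. split; [rewrite Szero; lra |].
split; [intro H; apply Sneg; pose proof (hF_hat_lt_m1 Cr rho hS Hc Hrho HhS hL H); unfold hh; lra |].
split; [intros _ H; apply Sneg; lra |].
split; [intro H; apply Spos; pose proof (hF_hat_gt_1 Cr rho hS Hc Hrho HhS hL H); unfold hh; lra |].
split; [intros _ H; apply Spos; lra |].
intros _ H; apply Szero; lra.
Qed.
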